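(* Let $x_0<\dots<x_n$ and $\hat x_0<\dots<\hat x_n$ be real numbers with $\hat x_0=x_0$ and $\hat x_n=x_n$, let $\mathbf{y}\in\mathbb{R}^{n+1}$, and let $z_k=z_k(\mathbf{x},\hat{\mathbf{x}})$. Then \[ \|\mathbf{y}\mathbf{z}\|_\infty\ \le\ \sup_{x_0\le t\le x_n}\bigl|p(t;\hat{\mathbf{x}},\mathbf{y},\lambda(\mathbf{x}))-P_{\mathbf{y}}(t)\bigr|\ \le\ \Lambda(\hat{\mathbf{x}})\,\|\mathbf{y}\mathbf{z}\|_\infty, \] where $(\mathbf{y}\mathbf{z})_k=y_kz_k$. Moreover $p(t;\hat{\mathbf{x}},\mathbf{y},\lambda(\mathbf{x}))=P_{\mathbf{y}+\mathbf{y}\mathbf{z}}(t)$ for all $t$.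
   Context: $\lambda_k(\mathbf{x}):=1/\prod_{j\neq k}(x_k-x_j)$ and $\lambda(\mathbf x)=(\lambda_0(\mathbf x),\dots,\lambda_n(\mathbf x))$; $z_k(\mathbf{x},\hat{\mathbf{x}}):=(\lambda_k(\mathbf{x})-\lambda_k(\hat{\mathbf{x}}))/\lambda_k(\hat{\mathbf{x}})$. The first barycentric formula is the polynomial $p(t;\mathbf{u},\mathbf{y},\mathbf{w}):=\bigl(\prod_{k=0}^n(t-u_k)\bigr)\sum_{k=0}^n\frac{w_ky_k}{t-u_k}$ (extended by continuity at the nodes). For $\mathbf{v}\in\mathbb{R}^{n+1}$, $P_{\mathbf{v}}$ denotes the unique polynomial of degree at most $n$ with $P_{\mathbf{v}}(\hat x_k)=v_k$ for all $k$. $\Lambda(\hat{\mathbf{x}}):=\max_{t\in[x_0,x_n]}\sum_{j}|\ell_j(t)|$ with $\ell_j$ the Lagrange polynomials for the nodes $\hat{\mathbf{x}}$. *)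

From HB Require Import structures.
From mathcomp Require Import all_boot all_order all_algebra.
From mathcomp Require Import classical_sets reals.
Set Implicit Arguments. Unset Strict Implicit. Unset Printing Implicit Defensive.
Import Order.TTheory GRing.Theory Num.Theory.
Local Open Scope ring_scope.

Section Defs.
Variables (R : realType) (n : nat).

Definition bary_lambda (x : 'I_n.+1 -> R) (k : 'I_n.+1) : R :=
  (\prod_(j < n.+1 | j != k) (x k - x j))^-1.

Definition bary_z (x xh : 'I_n.+1 -> R) (k : 'I_n.+1) : R :=
  (bary_lambda x k - bary_lambda xh k) / bary_lambda xh k.

(* First barycentric formula p(t; u, y, w) = (prod_k (t - u_k)) sum_k w_k y_k/(t - u_k),
   extended by continuity at the nodes, i.e. the polynomial
   sum_k w_k y_k prod_{j <> k} (X - u_j). *)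
Definition bary1 (u y w : 'I_n.+1 -> R) : {poly R} :=
  \sum_(k < n.+1) (w k * y k) *: \prod_(j < n.+1 | j != k) ('X - (u j)%:P).

Definition lagrange_basis (xh : 'I_n.+1 -> R) (j : 'I_n.+1) : {poly R} :=
  \prod_(k < n.+1 | k != j) ((xh j - xh k)^-1 *: ('X - (xh k)%:P)).

Definition lebesgue_const (xh : 'I_n.+1 -> R) (a b : R) : R :=
  sup [set s | exists t, a <= t <= b /\
         s = \sum_(j < n.+1) `|(lagrange_basis xh j).[t]|].

Definition supnorm_on (a b : R) (f : R -> R) : R :=
  sup [set s | exists t, a <= t <= b /\ s = `|f t|].

Definition vnorm_inf (v : 'I_n.+1 -> R) : R :=
  \big[Num.max/0]_(k < n.+1) `|v k|.

End Defs.

(* The polynomial p = bary1 xh y lambda(x) has degree at most n and takes the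
   value lambda_k(x) y_k / lambda_k(xh) = y_k + y_k z_k at the node xh_k, so it
   is the interpolant of y + yz; hence p - P_y interpolates yz and equals
   sum_k y_k z_k l_k.  Evaluated at the nodes, which lie in [x_0, x_n], this
   gives the lower bound; bounding |sum_k y_k z_k l_k(t)| by
   ||yz||_inf sum_k |l_k(t)| gives the upper bound. *)
From HB Require Import structures.
From mathcomp Require Import all_boot all_order all_algebra.
From mathcomp Require Import classical_sets reals.
From mathcomp Require Import ring lra.
Set Implicit Arguments. Unset Strict Implicit. Unset Printing Implicit Defensive.
Import Order.TTheory GRing.Theory Num.Theory.
Local Open Scope ring_scope.

Lemma incr_inj (R : realType) n (f : 'I_n.+1 -> R) :
  (forall i j : 'I_n.+1, (i < j)%N -> f i < f j) -> injective f.
Proof.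
move=> f_incr i j fij; apply/eqP; rewrite eq_le !leNgt.
by apply/andP; split; apply/negP => /f_incr; rewrite fij ltxx.
Qed.

Lemma incr_nodes_within (R : realType) n (f : 'I_n.+1 -> R) (i : 'I_n.+1) :
  (forall i j : 'I_n.+1, (i < j)%N -> f i < f j) -> f ord0 <= f i <= f ord_max.
Proof.
move=> f_incr; apply/andP; split.
  have [i0|i_gt0] := posnP i; last exact/ltW/f_incr.
  by have -> : i = ord0 by apply: val_inj.
have [i_lt|i_ge] := ltnP i n; first exact/ltW/f_incr.
have -> // : i = ord_max.
by apply/val_inj/eqP; rewrite eqn_leq i_ge -ltnS ltn_ord.
Qed.

Lemma size_prod_XsubC_but (R : idomainType) n (c : 'I_n.+1 -> R) (k : 'I_n.+1) :
  size (\prod_(j < n.+1 | j != k) ('X - (c j)%:P)) = n.+1.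
Proof.
rewrite -big_filter size_prod_XsubC.
have [e _ _ [_ ->]] := big_enumP (fun j : 'I_n.+1 => j != k).
by rewrite cardC1 card_ord.
Qed.

Lemma size_sum_leq (R : nzRingType) (I : finType) (F : I -> {poly R}) m :
  (forall i, size (F i) <= m)%N -> (size (\sum_i F i)%R <= m)%N.
Proof.
move=> F_small; apply: (big_ind (fun q : {poly R} => size q <= m)%N) => //.
- by rewrite size_poly0.
- by move=> p q hp hq; rewrite (leq_trans (size_polyD _ _)) // geq_max hp hq.
Qed.

Section Interpolation.
Variables (R : realType) (n : nat) (xh : 'I_n.+1 -> R).
Hypothesis xh_inj : injective xh.

Lemma subr_nodes_neq0 i j : i != j -> xh i - xh j != 0.
Proof. by rewrite subr_eq0 (inj_eq xh_inj). Qed.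

Lemma poly_eq_on_nodes (p q : {poly R}) :
  (size p <= n.+1)%N -> (size q <= n.+1)%N ->
  (forall i, p.[xh i] = q.[xh i]) -> p = q.
Proof.
move=> sp sq pq; apply/subr0_eq/(roots_geq_poly_eq0 (rs := map xh (enum 'I_n.+1))).
- by apply/allP => _ /mapP [i _ ->]; rewrite rootE hornerD hornerN pq subrr.
- by rewrite map_inj_uniq ?enum_uniq.
- rewrite size_map size_enum_ord (leq_trans (size_polyD _ _)) //.
  by rewrite size_polyN geq_max sp sq.
Qed.

Lemma bary_lambda_neq0 k : bary_lambda xh k != 0.
Proof.
rewrite invr_eq0 prodf_seq_neq0; apply/allP => j _.
by apply/implyP; rewrite eq_sym; exact: subr_nodes_neq0.
Qed.

Lemma horner_prod_node k i :
  (\prod_(j < n.+1 | j != k) ('X - (xh j)%:P)).[xh i] =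
  if i == k then (bary_lambda xh k)^-1 else 0.
Proof.
rewrite horner_prod; case: eqP => [->|/eqP nik].
  by rewrite invrK; apply: eq_bigr => j _; rewrite hornerXsubC.
by rewrite (bigD1 i) //= hornerXsubC subrr mul0r.
Qed.

Lemma bary1_node (y w : 'I_n.+1 -> R) i :
  (bary1 xh y w).[xh i] = w i * y i / bary_lambda xh i.
Proof.
rewrite horner_sum (bigD1 i) //= [X in _ + X]big1 => [|k ki].
  by rewrite hornerZ horner_prod_node eqxx addr0.
by rewrite hornerZ horner_prod_node eq_sym (negbTE ki) mulr0.
Qed.

Lemma bary1_lambda_node (x y : 'I_n.+1 -> R) i :
  (bary1 xh y (bary_lambda x)).[xh i] = y i + y i * bary_z x xh i.
Proof.
rewrite bary1_node /bary_z; have := bary_lambda_neq0 i.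
by move: (bary_lambda xh i) => l l_neq0; field.
Qed.

Lemma size_bary1 (y w : 'I_n.+1 -> R) : (size (bary1 xh y w) <= n.+1)%N.
Proof.
apply: size_sum_leq => k.
by rewrite (leq_trans (size_scale_leq _ _)) // size_prod_XsubC_but.
Qed.

Lemma lagrange_basis_node j i : (lagrange_basis xh j).[xh i] = (i == j)%:R.
Proof.
rewrite horner_prod; case: eqP => [->|/eqP nij].
  apply: big1 => k kj; rewrite hornerZ hornerXsubC mulVf //.
  by apply: subr_nodes_neq0; rewrite eq_sym.
by rewrite (bigD1 i) //= hornerZ hornerXsubC subrr mulr0 mul0r.
Qed.

Lemma size_lagrange_basis j : (size (lagrange_basis xh j) <= n.+1)%N.
Proof.
rewrite /lagrange_basis scaler_prod (leq_trans (size_scale_leq _ _)) //.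
by rewrite size_prod_XsubC_but.
Qed.

Lemma lagrange_expansion (q : {poly R}) : (size q <= n.+1)%N ->
  q = \sum_j q.[xh j] *: lagrange_basis xh j.
Proof.
move=> sq; apply: poly_eq_on_nodes => //.
  apply: size_sum_leq => j.
  by rewrite (leq_trans (size_scale_leq _ _)) ?size_lagrange_basis.
move=> i; rewrite horner_sum (bigD1 i) //= [X in _ + X]big1 => [|k ki].
  by rewrite hornerZ lagrange_basis_node eqxx mulr1 addr0.
by rewrite hornerZ lagrange_basis_node eq_sym (negbTE ki) mulr0.
Qed.

Lemma horner_lagrange_expansion (q : {poly R}) t : (size q <= n.+1)%N ->
  q.[t] = \sum_j q.[xh j] * (lagrange_basis xh j).[t].
Proof.
move=> sq; rewrite {1}(lagrange_expansion sq) horner_sum.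
by apply: eq_bigr => j _; rewrite hornerZ.
Qed.

End Interpolation.

Section SupNorms.
Variables (R : realType) (a b : R).

Lemma horner_norm_le (q : {poly R}) t : a <= t <= b ->
  `|q.[t]| <= \sum_(i < size q) `|q`_i| * (`|a| + `|b|) ^+ i.
Proof.
move=> /andP [ta tb].
have t_small : `|t| <= `|a| + `|b|.
  rewrite ler_norml; have := ler_norm b; have := ler_norm (- a).
  by rewrite normrN; have := normr_ge0 a; have := normr_ge0 b; lra.
rewrite horner_coef (le_trans (ler_norm_sum _ _ _)) //.
apply: ler_sum => i _; rewrite normrM normrX ler_wpM2l //.
by rewrite lerXn2r ?nnegrE ?addr_ge0.
Qed.

Lemma supnorm_on_poly_ge (f : R -> R) (q : {poly R}) t :
  (forall s, f s = q.[s]) -> a <= t <= b -> `|f t| <= supnorm_on a b f.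
Proof.
move=> fq t_in; apply: sup_upper_bound; last by exists t.
split; first by exists `|f t|, t.
by eexists => _ [s [s_in ->]]; rewrite fq; exact: horner_norm_le.
Qed.

Lemma supnorm_on_le (f : R -> R) (M : R) : a <= b ->
  (forall t, a <= t <= b -> `|f t| <= M) -> supnorm_on a b f <= M.
Proof.
move=> ab f_bnd; apply: ge_sup; first by exists `|f a|, a; rewrite lexx ab.
by move=> _ [t [t_in ->]]; exact: f_bnd.
Qed.

Lemma lebesgue_const_ge n (xh : 'I_n.+1 -> R) t : a <= t <= b ->
  \sum_(j < n.+1) `|(lagrange_basis xh j).[t]| <= lebesgue_const xh a b.
Proof.
move=> t_in; apply: sup_upper_bound; last by exists t.
split; first by exists (\sum_(j < n.+1) `|(lagrange_basis xh j).[t]|), t.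
eexists => _ [s [s_in ->]].
by apply: ler_sum => j _; exact: horner_norm_le.
Qed.

End SupNorms.

Section InfinityNorm.
Variables (R : realType) (n : nat) (v : 'I_n.+1 -> R).

Lemma vnorm_inf_ge k : `|v k| <= vnorm_inf v.
Proof. exact: le_bigmax. Qed.

Lemma vnorm_inf_ge0 : 0 <= vnorm_inf v.
Proof. exact: le_trans (normr_ge0 (v ord0)) (vnorm_inf_ge _). Qed.

Lemma vnorm_inf_le M : 0 <= M -> (forall k, `|v k| <= M) -> vnorm_inf v <= M.
Proof. by move=> M_ge0 v_bnd; apply: bigmax_le. Qed.

Lemma norm_sum_mul_le (c : 'I_n.+1 -> R) :
  `|\sum_k v k * c k| <= vnorm_inf v * \sum_k `|c k|.
Proof.
rewrite (le_trans (ler_norm_sum _ _ _)) // mulr_sumr.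
by apply: ler_sum => k _; rewrite normrM ler_wpM2r ?vnorm_inf_ge.
Qed.

End InfinityNorm.

Theorem theorem2 (R : realType) (n : nat) (x xh y : 'I_n.+1 -> R)
  (Py Pyz : {poly R}) :
  (forall i j : 'I_n.+1, (i < j)%N -> x i < x j) ->
  (forall i j : 'I_n.+1, (i < j)%N -> xh i < xh j) ->
  xh ord0 = x ord0 -> xh ord_max = x ord_max ->
  (size Py <= n.+1)%N -> (forall k, Py.[xh k] = y k) ->
  (size Pyz <= n.+1)%N ->
  (forall k, Pyz.[xh k] = y k + y k * bary_z x xh k) ->
  let p := bary1 xh y (bary_lambda x) in
  let yz := fun k => y k * bary_z x xh k in
  vnorm_inf yz <= supnorm_on (x ord0) (x ord_max) (fun t => p.[t] - Py.[t])
  /\ supnorm_on (x ord0) (x ord_max) (fun t => p.[t] - Py.[t])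
       <= lebesgue_const xh (x ord0) (x ord_max) * vnorm_inf yz
  /\ (forall t, p.[t] = Pyz.[t]).
Proof.
(* Only the nodes xh need to be ordered. *)
move=> _ xh_incr xh0 xhn sPy Py_nodes sPyz Pyz_nodes p yz.
have xh_inj := incr_inj xh_incr.
have nodes_in i : x ord0 <= xh i <= x ord_max.
  by rewrite -xh0 -xhn incr_nodes_within.
have err_nodes i : p.[xh i] - Py.[xh i] = yz i.
  by rewrite bary1_lambda_node // Py_nodes addrAC subrr add0r.
have errE t : p.[t] - Py.[t] = (p - Py).[t] by rewrite hornerD hornerN.
have sErr : (size (p - Py)%R <= n.+1)%N.
  by rewrite (leq_trans (size_polyD _ _)) // size_polyN geq_max size_bary1.
split; [|split].
- apply: vnorm_inf_le => [|k].
    exact: le_trans (normr_ge0 _) (supnorm_on_poly_ge errE (nodes_in ord0)).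
  by rewrite -err_nodes (supnorm_on_poly_ge errE (nodes_in k)).
- have /andP [ab0 a0b] := nodes_in ord0.
  apply: supnorm_on_le => [|t t_in]; first exact: le_trans ab0 a0b.
  rewrite errE (horner_lagrange_expansion xh_inj _ sErr).
  under eq_bigr do rewrite -errE err_nodes.
  rewrite (le_trans (norm_sum_mul_le _ _)) // mulrC.
  by rewrite ler_wpM2r ?vnorm_inf_ge0 ?lebesgue_const_ge.
- have -> // : p = Pyz.
  apply: (poly_eq_on_nodes xh_inj (size_bary1 _ _ _) sPyz) => i.
  by rewrite bary1_lambda_node // Pyz_nodes.
Qed.
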